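(* Let $a<b$ be real numbers and let $C[a,b]$ be the space of real continuous functions on $[a,b]$ with the norm $\|x\|=\sup_{t\in[a,b]}|x(t)|$; let $\ell_1$ be the space of real sequences with $\|x\|_1=\sum_i|x_i|<\infty$, and $\ell_\infty$ the space of bounded real sequences with $\|x\|_\infty=\sup_n|x_n|$. Then $S_P(C[a,b])=S_P(\ell_1)=S_P(\ell_\infty)=\tfrac12$; consequently none of $C[a,b]$, $\ell_1$, $\ell_\infty$ is uniformly non-square.
   Context: For a real Banach space $X$ with unit sphere $S_X$, the P-angle constant is $S_P(X)=\sup\left\{\frac{\|x+y\|^2+\|x-y\|^2-4}{2\|x+y\|\,\|x-y\|}: x,y\in S_X,\ x\neq \pm y\right\}$. $X$ is uniformly non-square if there exists $\delta\in(0,1)$ such that for all $x,y\in S_X$, either $\frac{\|x-y\|}{2}\le 1-\delta$ or $\frac{\|x+y\|}{2}\le 1-\delta$. *)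

From Stdlib Require Import Reals.
From Coquelicot Require Import Coquelicot.
Open Scope R_scope.

(** * Abstract setting: a real normed space presented by a carrier type [V],
    a membership predicate [inX] (the elements of the space), the norm [N],
    vector addition [add] and negation [opp]. *)

Section NormedPresentation.
Variables (V : Type) (inX : V -> Prop) (N : V -> R)
          (add : V -> V -> V) (opp : V -> V).

Definition in_sphere (x : V) : Prop := inX x /\ N x = 1.

Definition SP_set (q : R) : Prop :=
  exists x y : V, in_sphere x /\ in_sphere y /\ x <> y /\ x <> opp y /\
    q = ((N (add x y))^2 + (N (add x (opp y)))^2 - 4)
        / (2 * N (add x y) * N (add x (opp y))).

Definition S_P : Rbar := Lub_Rbar SP_set.

Definition uniformly_non_square : Prop :=
  exists delta : R, 0 < delta < 1 /\
    forall x y : V, in_sphere x -> in_sphere y ->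
      N (add x (opp y)) / 2 <= 1 - delta \/ N (add x y) / 2 <= 1 - delta.
End NormedPresentation.

Arguments S_P {V} inX N add opp.
Arguments uniformly_non_square {V} inX N add opp.

Definition Icc (a b : R) : Type := {t : R | a <= t <= b}.

Definition C_mem (a b : R) (f : Icc a b -> R) : Prop :=
  forall t : Icc a b, forall eps : R, 0 < eps ->
    exists delta : R, 0 < delta /\
      forall s : Icc a b, Rabs (proj1_sig s - proj1_sig t) < delta ->
        Rabs (f s - f t) < eps.

Definition C_norm (a b : R) (f : Icc a b -> R) : R :=
  real (Lub_Rbar (fun r => exists t : Icc a b, r = Rabs (f t))).

Definition C_add (a b : R) (f g : Icc a b -> R) : Icc a b -> R :=
  fun t => f t + g t.
Definition C_opp (a b : R) (f : Icc a b -> R) : Icc a b -> R :=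
  fun t => - f t.

Definition seq_add (x y : nat -> R) : nat -> R := fun n => x n + y n.
Definition seq_opp (x : nat -> R) : nat -> R := fun n => - x n.

Definition l1_mem (x : nat -> R) : Prop := ex_series (fun n => Rabs (x n)).
Definition l1_norm (x : nat -> R) : R := Series (fun n => Rabs (x n)).

Definition linf_mem (x : nat -> R) : Prop :=
  exists M : R, forall n, Rabs (x n) <= M.
Definition linf_norm (x : nat -> R) : R :=
  real (Lub_Rbar (fun r => exists n : nat, r = Rabs (x n))).

(** The quotient [(u^2 + v^2 - 4) / (2 u v)] is at most [1/2] whenever
    [0 <= u, v <= 2], and it equals [1/2] at [u = v = 2]. By the triangle
    inequality [||x + y||] and [||x - y||] lie in [[0, 2]] on the unit sphere, so
    [S_P(X) = 1/2] as soon as [X] contains a "square": unit vectors [x, y] with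
    [||x + y|| = ||x - y|| = 2]. Such a pair also violates uniform non-squareness.
    In [C[a,b]] and [l_infinity] take [x = 1] and [y] a function of sup norm 1
    taking both values [1] and [-1]; in [l_1] take the first two unit vectors. *)

From Coquelicot Require Import Coquelicot.
From Stdlib Require Import Reals Lra Lia.
Open Scope R_scope.

Lemma P_angle_quotient_le_half (u v : R) :
  0 <= u <= 2 -> 0 <= v <= 2 -> (u^2 + v^2 - 4) / (2 * u * v) <= 1/2.
Proof.
  intros Hu Hv.
  destruct (Req_dec (u * v) 0) as [Huv | Huv].
  - replace (2 * u * v) with 0 by nra.
    unfold Rdiv; rewrite Rinv_0; lra.
  - assert (Hpos : 0 < 2 * u * v) by nra.
    apply Rmult_le_reg_r with (2 * u * v); [exact Hpos|].
    unfold Rdiv; rewrite Rmult_assoc, Rinv_l by lra.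
    nra.
Qed.

Section Squares.
Variables (V : Type) (inX : V -> Prop) (N : V -> R)
          (add : V -> V -> V) (opp : V -> V).

Definition square_pair (x y : V) : Prop :=
  in_sphere V inX N x /\ in_sphere V inX N y /\ x <> y /\ x <> opp y /\
  N (add x y) = 2 /\ N (add x (opp y)) = 2.

Definition sphere_sums_le_2 : Prop :=
  forall x y, in_sphere V inX N x -> in_sphere V inX N y ->
    0 <= N (add x y) <= 2 /\ 0 <= N (add x (opp y)) <= 2.

Lemma S_P_eq_half_of_square_pair (x y : V) :
  sphere_sums_le_2 -> square_pair x y -> S_P inX N add opp = Finite (1/2).
Proof.
  intros Hsums (Hx & Hy & Hxy & Hxny & Hplus & Hminus).
  apply is_lub_Rbar_unique; split.
  - intros q (x' & y' & Hx' & Hy' & _ & _ & ->); simpl.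
    destruct (Hsums x' y' Hx' Hy').
    apply P_angle_quotient_le_half; assumption.
  - intros l Hl; apply Hl.
    exists x, y; do 4 (split; [assumption|]).
    rewrite Hplus, Hminus; field.
Qed.

Lemma not_uniformly_non_square_of_square_pair (x y : V) :
  square_pair x y -> ~ uniformly_non_square inX N add opp.
Proof.
  intros (Hx & Hy & _ & _ & Hplus & Hminus) (delta & Hdelta & Huns).
  destruct (Huns x y Hx Hy) as [Hle | Hle];
    [rewrite Hminus in Hle | rewrite Hplus in Hle]; lra.
Qed.

End Squares.

Arguments square_pair {V} inX N add opp x y.
Arguments sphere_sums_le_2 {V} inX N add opp.
Arguments S_P_eq_half_of_square_pair {V inX N add opp x y}.
Arguments not_uniformly_non_square_of_square_pair {V inX N add opp x y}.

Section SupNorm.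
Variable T : Type.

(* [C_norm a b] and [linf_norm] are instances of [sup_norm] up to conversion. *)
Definition sup_norm (f : T -> R) : R :=
  real (Lub_Rbar (fun r => exists t, r = Rabs (f t))).

(* The positivity hypothesis excludes the junk value [0] of an unbounded [f]. *)
Lemma sup_norm_ub (f : T -> R) (t : T) :
  0 < sup_norm f -> Rabs (f t) <= sup_norm f.
Proof.
  unfold sup_norm; intros Hpos.
  destruct (Lub_Rbar_correct (fun r => exists t, r = Rabs (f t))) as [Hub _].
  destruct (Lub_Rbar _) as [r | |]; simpl in *; try lra.
  apply (Hub (Rabs (f t))); exists t; reflexivity.
Qed.

Lemma sup_norm_le (f : T -> R) (M : R) (t0 : T) :
  (forall t, Rabs (f t) <= M) -> 0 <= sup_norm f <= M.
Proof.
  unfold sup_norm; intros Hbound.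
  destruct (Lub_Rbar_correct (fun r => exists t, r = Rabs (f t))) as [Hub Hleast].
  assert (Hle : Rbar_le (Lub_Rbar (fun r => exists t, r = Rabs (f t))) M).
  { apply Hleast; intros r [t ->]; apply Hbound. }
  assert (Hge := Hub (Rabs (f t0)) (ex_intro _ t0 eq_refl)).
  pose proof (Rabs_pos (f t0)).
  destruct (Lub_Rbar _) as [r | |]; simpl in *; try contradiction; lra.
Qed.

Lemma sup_norm_attained (f : T -> R) (M : R) (t0 : T) :
  (forall t, Rabs (f t) <= M) -> Rabs (f t0) = M -> sup_norm f = M.
Proof.
  intros Hbound Ht0; unfold sup_norm.
  rewrite (is_lub_Rbar_unique _ (Finite M)); [reflexivity|].
  split.
  - intros r [t ->]; apply Hbound.
  - intros l Hl; apply Hl; exists t0; symmetry; exact Ht0.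
Qed.

Lemma sup_norm_unit_sums_le_2 (f g : T -> R) (t0 : T) :
  sup_norm f = 1 -> sup_norm g = 1 ->
  0 <= sup_norm (fun t => f t + g t) <= 2 /\
  0 <= sup_norm (fun t => f t + - g t) <= 2.
Proof.
  intros Hf Hg.
  assert (Hfb : forall t, Rabs (f t) <= 1)
    by (intro t; rewrite <- Hf; apply sup_norm_ub; lra).
  assert (Hgb : forall t, Rabs (g t) <= 1)
    by (intro t; rewrite <- Hg; apply sup_norm_ub; lra).
  split; apply (sup_norm_le _ _ t0); intro t;
    eapply Rle_trans; try apply Rabs_triang;
    try rewrite Rabs_Ropp; specialize (Hfb t); specialize (Hgb t); lra.
Qed.

Lemma sup_norm_square (g : T -> R) (tp tm : T) :
  (forall t, Rabs (g t) <= 1) -> g tp = 1 -> g tm = -1 ->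
  sup_norm (fun _ => 1) = 1 /\ sup_norm g = 1 /\
  sup_norm (fun t => 1 + g t) = 2 /\ sup_norm (fun t => 1 + - g t) = 2.
Proof.
  intros Hg Hp Hm.
  assert (Hbetween : forall t, -1 <= g t <= 1)
    by (intro t; apply Rabs_le_between, Hg).
  split; [|split; [|split]].
  - apply (sup_norm_attained _ _ tp); intros; rewrite Rabs_R1; lra.
  - apply (sup_norm_attained _ _ tp); [exact Hg | rewrite Hp; apply Rabs_R1].
  - apply (sup_norm_attained _ _ tp).
    + intro t; apply Rabs_le; specialize (Hbetween t); lra.
    + rewrite Hp, Rabs_pos_eq; lra.
  - apply (sup_norm_attained _ _ tm).
    + intro t; apply Rabs_le; specialize (Hbetween t); lra.
    + rewrite Hm, Rabs_pos_eq; lra.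
Qed.

End SupNorm.

Lemma C_mem_of_lipschitz (a b L : R) (f : Icc a b -> R) :
  0 <= L ->
  (forall s t, Rabs (f s - f t) <= L * Rabs (proj1_sig s - proj1_sig t)) ->
  C_mem a b f.
Proof.
  intros HL Hlip t eps Heps.
  exists (eps / (L + 1)); split.
  - apply Rdiv_lt_0_compat; lra.
  - intros s Hst.
    apply Rle_lt_trans with ((L + 1) * Rabs (proj1_sig s - proj1_sig t)).
    + pose proof (Rabs_pos (proj1_sig s - proj1_sig t)).
      specialize (Hlip s t); nra.
    + apply Rmult_lt_compat_l with (r := L + 1) in Hst; [|lra].
      replace ((L + 1) * (eps / (L + 1))) with eps in Hst by (field; lra).
      exact Hst.
Qed.

Definition Icc_left (a b : R) (hab : a <= b) : Icc a b :=
  exist _ a (conj (Rle_refl a) hab).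
Definition Icc_right (a b : R) (hab : a <= b) : Icc a b :=
  exist _ b (conj hab (Rle_refl b)).

Definition ramp (a b : R) (t : Icc a b) : R :=
  (2 * proj1_sig t - a - b) / (b - a).

Section Ramp.
Variables (a b : R).
Hypothesis hab : a < b.

Lemma ramp_lipschitz (s t : Icc a b) :
  Rabs (ramp a b s - ramp a b t) = 2 / (b - a) * Rabs (proj1_sig s - proj1_sig t).
Proof.
  unfold ramp.
  replace ((2 * proj1_sig s - a - b) / (b - a) - (2 * proj1_sig t - a - b) / (b - a))
    with (2 / (b - a) * (proj1_sig s - proj1_sig t)) by (field; lra).
  rewrite Rabs_mult, (Rabs_pos_eq (2 / (b - a))); [reflexivity|].
  apply Rlt_le, Rdiv_lt_0_compat; lra.
Qed.

Lemma ramp_bounded (t : Icc a b) : Rabs (ramp a b t) <= 1.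
Proof.
  destruct t as [t Ht]; unfold ramp; simpl.
  apply Rabs_le.
  split; [apply Rle_div_r | apply Rle_div_l]; lra.
Qed.

Lemma ramp_left : ramp a b (Icc_left a b (Rlt_le _ _ hab)) = -1.
Proof. unfold ramp; simpl; field; lra. Qed.

Lemma ramp_right : ramp a b (Icc_right a b (Rlt_le _ _ hab)) = 1.
Proof. unfold ramp; simpl; field; lra. Qed.

Lemma C_sphere_sums_le_2 :
  sphere_sums_le_2 (C_mem a b) (C_norm a b) (C_add a b) (C_opp a b).
Proof.
  intros f g [_ Hf] [_ Hg].
  exact (sup_norm_unit_sums_le_2 _ f g (Icc_left a b (Rlt_le _ _ hab)) Hf Hg).
Qed.

Lemma C_square_pair :
  square_pair (C_mem a b) (C_norm a b) (C_add a b) (C_opp a b)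
    (fun _ => 1) (ramp a b).
Proof.
  pose proof ramp_left as Hleft; pose proof ramp_right as Hright.
  set (tl := Icc_left a b (Rlt_le _ _ hab)) in Hleft.
  set (tr := Icc_right a b (Rlt_le _ _ hab)) in Hright.
  destruct (sup_norm_square _ (ramp a b) tr tl ramp_bounded Hright Hleft)
    as (H1 & Hramp & Hplus & Hminus).
  assert (Hlip : forall s t, Rabs (ramp a b s - ramp a b t)
                 <= 2 / (b - a) * Rabs (proj1_sig s - proj1_sig t))
    by (intros; rewrite ramp_lipschitz; apply Rle_refl).
  assert (Hslope : 0 <= 2 / (b - a)) by (apply Rlt_le, Rdiv_lt_0_compat; lra).
  repeat split.
  - apply (C_mem_of_lipschitz _ _ 0); [lra|].
    intros; rewrite Rminus_diag, Rabs_R0; lra.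
  - exact H1.
  - exact (C_mem_of_lipschitz _ _ _ _ Hslope Hlip).
  - exact Hramp.
  - intro E; apply (f_equal (fun f => f tl)) in E.
    rewrite Hleft in E; lra.
  - intro E; apply (f_equal (fun f => f tr)) in E.
    unfold C_opp in E; rewrite Hright in E; lra.
  - exact Hplus.
  - exact Hminus.
Qed.

End Ramp.

Definition sign_flip (n : nat) : R := match n with O => 1 | S _ => -1 end.

Lemma linf_sphere_sums_le_2 :
  sphere_sums_le_2 linf_mem linf_norm seq_add seq_opp.
Proof.
  intros x y [_ Hx] [_ Hy].
  exact (sup_norm_unit_sums_le_2 _ x y O Hx Hy).
Qed.

Lemma linf_square_pair :
  square_pair linf_mem linf_norm seq_add seq_opp (fun _ => 1) sign_flip.
Proof.
  assert (Hbounded : forall n, Rabs (sign_flip n) <= 1).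
  { intros [|n]; apply Rabs_le; simpl; lra. }
  destruct (sup_norm_square _ sign_flip O 1%nat Hbounded eq_refl eq_refl)
    as (H1 & Hflip & Hplus & Hminus).
  repeat split.
  - exists 1; intro; rewrite Rabs_R1; lra.
  - exact H1.
  - exists 1; exact Hbounded.
  - exact Hflip.
  - intro E; apply (f_equal (fun f => f 1%nat)) in E; simpl in E; lra.
  - intro E; apply (f_equal (fun f => f O)) in E; unfold seq_opp in E; simpl in E; lra.
  - exact Hplus.
  - exact Hminus.
Qed.

Lemma is_series_two_terms (f : nat -> R) :
  (forall k, f (S (S k)) = 0) -> is_series f (f O + f 1%nat).
Proof.
  intros Htail.
  apply (is_series_decr_n f 2); [lia|].
  simpl; match goal with |- is_series _ ?l => replace l with 0 end.
  2: rewrite sum_Sn, sum_O; compute; ring.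
  apply (is_series_ext (fun _ => 0)); [intro k; symmetry; apply Htail|].
  apply filterlim_ext with (fun _ => 0).
  - intro n; symmetry; exact (sum_n_m_const_zero O n).
  - apply filterlim_const.
Qed.

Lemma l1_norm_nonneg (x : nat -> R) : l1_mem x -> 0 <= l1_norm x.
Proof.
  intro Hx; apply Rle_trans with (Rabs (Series x)).
  - apply Rabs_pos.
  - exact (Series_Rabs x Hx).
Qed.

Lemma l1_triangle (x y : nat -> R) :
  l1_mem x -> l1_mem y ->
  l1_mem (seq_add x y) /\ l1_norm (seq_add x y) <= l1_norm x + l1_norm y.
Proof.
  intros Hx Hy.
  assert (Hsum : ex_series (fun n => Rabs (x n) + Rabs (y n)))
    by exact (ex_series_plus _ _ Hx Hy).
  assert (Hmem : l1_mem (seq_add x y)).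
  { apply (@ex_series_le R_AbsRing R_CompleteNormedModule)
      with (fun n => Rabs (x n) + Rabs (y n)); [|exact Hsum].
    intro n; change (Rabs (Rabs (x n + y n)) <= Rabs (x n) + Rabs (y n)).
    rewrite Rabs_Rabsolu; apply Rabs_triang. }
  split; [exact Hmem|].
  unfold l1_norm; rewrite <- Series_plus by assumption.
  apply Series_le; [|exact Hsum].
  intro n; split; [apply Rabs_pos | apply Rabs_triang].
Qed.

Lemma l1_mem_opp (x : nat -> R) : l1_mem x -> l1_mem (seq_opp x).
Proof.
  apply ex_series_ext; intro n; unfold seq_opp; symmetry; apply Rabs_Ropp.
Qed.

Lemma l1_norm_opp (x : nat -> R) : l1_norm (seq_opp x) = l1_norm x.
Proof.
  apply Series_ext; intro n; unfold seq_opp; apply Rabs_Ropp.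
Qed.

Lemma l1_sphere_sums_le_2 :
  sphere_sums_le_2 l1_mem l1_norm seq_add seq_opp.
Proof.
  intros x y [Hx Hx1] [Hy Hy1].
  pose proof (l1_mem_opp y Hy) as Hy'.
  destruct (l1_triangle x y Hx Hy) as [Hplus Hplus_le].
  destruct (l1_triangle x (seq_opp y) Hx Hy') as [Hminus Hminus_le].
  rewrite l1_norm_opp in Hminus_le.
  pose proof (l1_norm_nonneg _ Hplus); pose proof (l1_norm_nonneg _ Hminus).
  lra.
Qed.

Definition unit_seq (i n : nat) : R := if Nat.eqb n i then 1 else 0.

Lemma l1_norm_two_terms (x : nat -> R) :
  (forall k, x (S (S k)) = 0) ->
  l1_mem x /\ l1_norm x = Rabs (x O) + Rabs (x 1%nat).
Proof.
  intro Htail.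
  assert (H : is_series (fun n => Rabs (x n)) (Rabs (x O) + Rabs (x 1%nat))).
  { apply is_series_two_terms; intro k; rewrite Htail; apply Rabs_R0. }
  split; [eexists; exact H | exact (is_series_unique _ _ H)].
Qed.

Lemma l1_square_pair :
  square_pair l1_mem l1_norm seq_add seq_opp (unit_seq 0) (unit_seq 1).
Proof.
  destruct (l1_norm_two_terms (unit_seq 0)) as [H0 Hn0]; [reflexivity|].
  destruct (l1_norm_two_terms (unit_seq 1)) as [H1 Hn1]; [reflexivity|].
  destruct (l1_norm_two_terms (seq_add (unit_seq 0) (unit_seq 1))) as [_ Hplus];
    [intro; unfold seq_add, unit_seq; simpl; ring|].
  destruct (l1_norm_two_terms (seq_add (unit_seq 0) (seq_opp (unit_seq 1))))
    as [_ Hminus]; [intro; unfold seq_add, seq_opp, unit_seq; simpl; ring|].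
  repeat split; try assumption.
  - rewrite Hn0; unfold unit_seq; simpl; rewrite Rabs_R1, Rabs_R0; ring.
  - rewrite Hn1; unfold unit_seq; simpl; rewrite Rabs_R1, Rabs_R0; ring.
  - intro E; apply (f_equal (fun f => f O)) in E; unfold unit_seq in E; simpl in E; lra.
  - intro E; apply (f_equal (fun f => f O)) in E.
    unfold seq_opp, unit_seq in E; simpl in E; lra.
  - rewrite Hplus; unfold seq_add, unit_seq; simpl.
    rewrite Rplus_0_r, Rplus_0_l, Rabs_R1; ring.
  - rewrite Hminus; unfold seq_add, seq_opp, unit_seq; simpl.
    rewrite Ropp_0, Rplus_0_r, Rplus_0_l, Rabs_Ropp, Rabs_R1; ring.
Qed.

Theorem mainTheorem13 (a b : R) (hab : a < b) :
  S_P (C_mem a b) (C_norm a b) (C_add a b) (C_opp a b) = Finite (1/2) /\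
  S_P l1_mem l1_norm seq_add seq_opp = Finite (1/2) /\
  S_P linf_mem linf_norm seq_add seq_opp = Finite (1/2) /\
  ~ uniformly_non_square (C_mem a b) (C_norm a b) (C_add a b) (C_opp a b) /\
  ~ uniformly_non_square l1_mem l1_norm seq_add seq_opp /\
  ~ uniformly_non_square linf_mem linf_norm seq_add seq_opp.
Proof.
  pose proof (C_square_pair a b hab) as HC.
  pose proof l1_square_pair as Hl1.
  pose proof linf_square_pair as Hlinf.
  repeat split.
  - exact (S_P_eq_half_of_square_pair (C_sphere_sums_le_2 a b hab) HC).
  - exact (S_P_eq_half_of_square_pair l1_sphere_sums_le_2 Hl1).
  - exact (S_P_eq_half_of_square_pair linf_sphere_sums_le_2 Hlinf).
  - exact (not_uniformly_non_square_of_square_pair HC).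
  - exact (not_uniformly_non_square_of_square_pair Hl1).
  - exact (not_uniformly_non_square_of_square_pair Hlinf).
Qed.
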